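(* Let $f:[0,\infty)\to[0,\infty)$ be continuously differentiable with $f>0$ on $[t_0,\infty)$ for some $t_0\ge0$ and $f\in C^2([t_0,\infty))$, let $g=\log f$ on $[t_0,\infty)$, and assume condition (H1) of the context. Then $g$ and $g'$ are strictly increasing on $[t_0,\infty)$, $g(t)\to\infty$ and $g'(t)\to\infty$ as $t\to\infty$, and $$\lim_{t\to\infty}\frac{\log g'(t)}{g(t)}=0.$$
   Context: Condition (H1): (i) $g'(t)>0$ and $g''(t)>0$ for all $t\ge t_0$, and there is a pair $(q,p)$ with either $q=1$ and $p\in(0,\infty]$, or $q\in(1,\infty)$ and $p\in(0,\infty)$, such that $\lim_{t\to\infty}\frac{g'(t)^2}{g(t)g''(t)}=q$ and $\lim_{t\to\infty}\frac{tg'(t)}{g(t)}=p$; (ii) if $q=1$, then $tg'(t)/g(t)$ is nondecreasing on $[t_0,\infty)$ and there exist $k\in\mathbb{N}$ and $\hat g\in C^2([t_0,\infty))$ with $f=\exp_k\circ\hat g$ and $\hat g'/\hat g$ nonincreasing on $[t_0,\infty)$ ($\exp_1=\exp$, $\exp_k=\exp_{k-1}\circ\exp$). *)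

From Stdlib Require Import Reals.
From Coquelicot Require Import Coquelicot.
Open Scope R_scope.

Fixpoint exp_iter (k : nat) (x : R) : R :=
  match k with
  | O => x
  | S k' => exp (exp_iter k' x)
  end.

Definition cont_within_ge (a : R) (h : R -> R) (t : R) : Prop :=
  filterlim h (within (fun x => a <= x) (locally t)) (locally (h t)).

Definition C1_on_ge (a : R) (h : R -> R) : Prop :=
  forall t, a <= t -> ex_derive h t /\ cont_within_ge a (Derive h) t.

Definition C2_on_ge (a : R) (h : R -> R) : Prop :=
  forall t, a <= t ->
    ex_derive h t /\ ex_derive (Derive h) t /\
    cont_within_ge a (Derive (Derive h)) t.

Definition H1 (f g : R -> R) (t0 : R) : Prop :=
  (forall t, t0 <= t -> 0 < Derive g t /\ 0 < Derive (Derive g) t) /\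
  exists (q : R) (p : Rbar),
    ((q = 1 /\ Rbar_lt (Finite 0) p) \/
     (1 < q /\ exists p' : R, p = Finite p' /\ 0 < p')) /\
    is_lim (fun t => (Derive g t) ^ 2 / (g t * Derive (Derive g) t))
           p_infty (Finite q) /\
    is_lim (fun t => t * Derive g t / g t) p_infty p /\
    (q = 1 ->
       (forall s t, t0 <= s -> s <= t -> s * Derive g s / g s <= t * Derive g t / g t) /\
       exists (k : nat) (gh : R -> R),
         (1 <= k)%nat /\ C2_on_ge t0 gh /\
         (forall t, t0 <= t -> f t = exp_iter k (gh t)) /\
         (forall s t, t0 <= s -> s <= t ->
            Derive gh t / gh t <= Derive gh s / gh s)).

(* Since [g' > 0] and [g'' > 0], both [g] and [g'] increase, and [g]
   grows at least linearly.  Writing [r = g'^2 / (g g'')] one has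
   [(ln g)' = g' / g = r (g'' / g') = r (ln g')'], and [r] eventually lies in
   [[m, M]] with [0 < m] because it tends to [q >= 1].  Integrating gives
   [m (ln g'(t) - ln g'(T)) <= ln g(t) - ln g(T) <= M (ln g'(t) - ln g'(T))]:
   the right inequality sends [g'] to infinity along with [ln g], the left one
   bounds [ln g'] by a constant plus [(ln g) / m], which is [o(g)]. *)

From Stdlib Require Import Reals Lra.
From Coquelicot Require Import Coquelicot.
Open Scope R_scope.

Lemma continuity_pt_is_derive (h : R -> R) (x l : R) :
  is_derive h x l -> continuity_pt h x.
Proof.
  intros Hd. apply continuity_pt_filterlim.
  apply (ex_derive_continuous (K := R_AbsRing) (V := R_NormedModule)).
  now exists l.
Qed.

Lemma lt_of_is_derive_pos (h dh : R -> R) (a b : R) : a < b ->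
  (forall x, a < x < b -> is_derive h x (dh x)) ->
  (forall x, a <= x <= b -> 0 < dh x) ->
  (forall x, a <= x <= b -> continuity_pt h x) -> h a < h b.
Proof.
  intros Hab Hd Hpos Hcont.
  destruct (MVT_gen h a b dh) as [c [Hc Heq]];
    rewrite ?Rmin_left, ?Rmax_right in * by lra.
  - intros x Hx. apply Hd; lra.
  - exact Hcont.
  - assert (0 < dh c * (b - a))
      by (apply Rmult_lt_0_compat; [apply Hpos, Hc | lra]).
    lra.
Qed.

Lemma increment_le_of_is_derive_le (u v du dv : R -> R) (a b : R) : a <= b ->
  (forall x, a <= x <= b -> is_derive u x (du x)) ->
  (forall x, a <= x <= b -> is_derive v x (dv x)) ->
  (forall x, a <= x <= b -> du x <= dv x) ->
  u b - u a <= v b - v a.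
Proof.
  intros Hab Hu Hv Hle.
  assert (Hd : forall x, a <= x <= b ->
            is_derive (fun y => v y - u y) x (dv x - du x)).
  { intros x Hx. now apply (is_derive_minus (K := R_AbsRing) (V := R_NormedModule));
      [apply Hv | apply Hu]. }
  destruct (MVT_gen (fun y => v y - u y) a b (fun y => dv y - du y)) as [c [Hc Heq]];
    rewrite ?Rmin_left, ?Rmax_right in * by lra.
  - intros x Hx. apply Hd; lra.
  - intros x Hx. apply (continuity_pt_is_derive _ _ _ (Hd x Hx)).
  - assert (0 <= (dv c - du c) * (b - a))
      by (apply Rmult_le_pos; [specialize (Hle c Hc) | ]; lra).
    lra.
Qed.

Lemma is_derive_ln_comp (h : R -> R) (x dh : R) :
  is_derive h x dh -> 0 < h x -> is_derive (fun y => ln (h y)) x (dh / h x).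
Proof.
  intros Hd Hpos.
  replace (dh / h x) with (scal dh (/ h x))
    by (unfold scal; simpl; unfold mult; simpl; unfold Rdiv; ring).
  apply (is_derive_comp (K := R_AbsRing) (V := R_NormedModule) ln h); auto.
  now apply is_derive_ln.
Qed.

Lemma ratio_ge_scaled (G d d2 m : R) : 0 < G -> 0 < d -> 0 < d2 ->
  m <= d ^ 2 / (G * d2) -> m * (d2 / d) <= d / G.
Proof.
  intros HG Hd Hd2 Hm.
  replace (d / G) with (d ^ 2 / (G * d2) * (d2 / d)) by (field; lra).
  apply Rmult_le_compat_r; [left; apply Rdiv_lt_0_compat |]; lra.
Qed.

Lemma ratio_le_scaled (G d d2 M : R) : 0 < G -> 0 < d -> 0 < d2 ->
  d ^ 2 / (G * d2) <= M -> d / G <= M * (d2 / d).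
Proof.
  intros HG Hd Hd2 HM.
  replace (d / G) with (d ^ 2 / (G * d2) * (d2 / d)) by (field; lra).
  apply Rmult_le_compat_r; [left; apply Rdiv_lt_0_compat |]; lra.
Qed.

Lemma is_lim_eventually_near (h : R -> R) (l eps : R) : 0 < eps ->
  is_lim h p_infty l -> Rbar_locally p_infty (fun x => l - eps <= h x <= l + eps).
Proof.
  intros Heps Hlim. apply is_lim_spec in Hlim.
  destruct (Hlim (mkposreal eps Heps)) as [N HN].
  exists N. intros x Hx. specialize (HN x Hx). apply Rabs_def2 in HN. simpl in HN. lra.
Qed.

Section ConvexGrowth.

Variables (g d d2 : R -> R) (a : R).

Hypothesis g_deriv : forall x, a <= x -> is_derive g x (d x).
Hypothesis d_deriv : forall x, a < x -> is_derive d x (d2 x).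
Hypothesis d_cont : forall x, a <= x -> continuity_pt d x.
Hypothesis d_pos : forall x, a <= x -> 0 < d x.
Hypothesis d2_pos : forall x, a <= x -> 0 < d2 x.

Lemma g_increasing (s t : R) : a <= s -> s < t -> g s < g t.
Proof.
  intros Hs Hst. apply (lt_of_is_derive_pos g d); auto.
  - intros x Hx. apply g_deriv; lra.
  - intros x Hx. apply d_pos; lra.
  - intros x Hx. apply (continuity_pt_is_derive _ _ _ (g_deriv x ltac:(lra))).
Qed.

Lemma d_increasing (s t : R) : a <= s -> s < t -> d s < d t.
Proof.
  intros Hs Hst. apply (lt_of_is_derive_pos d d2); auto.
  - intros x Hx. apply d_deriv; lra.
  - intros x Hx. apply d2_pos; lra.
  - intros x Hx. apply d_cont; lra.
Qed.

Lemma d_start_le (x : R) : a <= x -> d a <= d x.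
Proof.
  intros Hx. destruct (Req_dec x a) as [->|Hne]; [lra|].
  left. apply d_increasing; lra.
Qed.

Lemma g_ge_tangent (x : R) : a <= x -> g a + d a * (x - a) <= g x.
Proof.
  intros Hx.
  assert (d a * x - d a * a <= g x - g a); [|lra].
  apply (increment_le_of_is_derive_le (fun y => d a * y) g (fun _ => d a) d); auto.
  - intros y _. auto_derive; [exact I | ring].
  - intros y Hy. apply g_deriv; lra.
  - intros y Hy. apply d_start_le; lra.
Qed.

Lemma is_lim_g : is_lim g p_infty p_infty.
Proof.
  pose proof (d_pos a (Rle_refl a)) as Hda.
  apply is_lim_spec. intros M. exists (a + Rabs (M - g a) / d a). intros x Hx.
  assert (Rabs (M - g a) < d a * (x - a)).
  { replace (Rabs (M - g a)) with (d a * (Rabs (M - g a) / d a)) by (field; lra).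
    apply Rmult_lt_compat_l; lra. }
  assert (0 <= Rabs (M - g a) / d a)
    by (apply Rmult_le_pos; [apply Rabs_pos | left; apply Rinv_0_lt_compat; lra]).
  pose proof (Rle_abs (M - g a)). pose proof (g_ge_tangent x ltac:(lra)). lra.
Qed.

Lemma eventually_beyond (P : R -> Prop) : Rbar_locally p_infty P ->
  exists T, forall x, T <= x -> a < x /\ 0 < g x /\ P x.
Proof.
  intros [N HN]. pose proof is_lim_g as Hg. apply is_lim_spec in Hg.
  destruct (Hg 0) as [N0 HN0].
  exists (Rmax (a + 1) (Rmax N N0) + 1). intros x Hx.
  pose proof (Rmax_l (a + 1) (Rmax N N0)). pose proof (Rmax_r (a + 1) (Rmax N N0)).
  pose proof (Rmax_l N N0). pose proof (Rmax_r N N0).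
  repeat split; [lra | apply HN0 | apply HN]; lra.
Qed.

Lemma g_pos_beyond (T x : R) : a <= T -> 0 < g T -> T <= x -> 0 < g x.
Proof.
  intros HT HgT Hx. destruct (Req_dec x T) as [->|Hne]; auto.
  pose proof (g_increasing T x HT ltac:(lra)). lra.
Qed.

Lemma is_derive_ln_d (x : R) : a < x -> is_derive (fun y => ln (d y)) x (d2 x / d x).
Proof. intros Hx. apply is_derive_ln_comp; [apply d_deriv | apply d_pos]; lra. Qed.

Lemma is_derive_ln_g (x : R) : a <= x -> 0 < g x ->
  is_derive (fun y => ln (g y)) x (d x / g x).
Proof. intros Hx Hgx. apply is_derive_ln_comp; auto. Qed.

Lemma ln_d_increment_le (m T x : R) : a < T -> 0 < g T ->
  (forall y, T <= y -> m <= d y ^ 2 / (g y * d2 y)) -> T <= x ->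
  m * (ln (d x) - ln (d T)) <= ln (g x) - ln (g T).
Proof.
  intros HT HgT Hr Hx. rewrite Rmult_minus_distr_l.
  apply (increment_le_of_is_derive_le (fun y => m * ln (d y)) (fun y => ln (g y))
           (fun y => m * (d2 y / d y)) (fun y => d y / g y)); auto.
  - intros y Hy. apply is_derive_scal, is_derive_ln_d; lra.
  - intros y Hy. apply is_derive_ln_g; [| apply (g_pos_beyond T)]; lra.
  - intros y Hy. apply ratio_ge_scaled;
      [apply (g_pos_beyond T) | apply d_pos | apply d2_pos | apply Hr]; lra.
Qed.

Lemma ln_d_increment_ge (M T x : R) : a < T -> 0 < g T ->
  (forall y, T <= y -> d y ^ 2 / (g y * d2 y) <= M) -> T <= x ->
  ln (g x) - ln (g T) <= M * (ln (d x) - ln (d T)).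
Proof.
  intros HT HgT Hr Hx. rewrite Rmult_minus_distr_l.
  apply (increment_le_of_is_derive_le (fun y => ln (g y)) (fun y => M * ln (d y))
           (fun y => d y / g y) (fun y => M * (d2 y / d y))); auto.
  - intros y Hy. apply is_derive_ln_g; [| apply (g_pos_beyond T)]; lra.
  - intros y Hy. apply is_derive_scal, is_derive_ln_d; lra.
  - intros y Hy. apply ratio_le_scaled;
      [apply (g_pos_beyond T) | apply d_pos | apply d2_pos | apply Hr]; lra.
Qed.

Lemma is_lim_ln_g : is_lim (fun x => ln (g x)) p_infty p_infty.
Proof.
  apply (is_lim_comp ln g p_infty p_infty p_infty is_lim_ln_p is_lim_g).
  exists 0. intros; discriminate.
Qed.

Lemma is_lim_d (M : R) : 0 < M ->
  Rbar_locally p_infty (fun x => d x ^ 2 / (g x * d2 x) <= M) ->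
  is_lim d p_infty p_infty.
Proof.
  intros HM Hev. destruct (eventually_beyond _ Hev) as [T HT].
  destruct (HT T (Rle_refl T)) as [HaT [HgT _]].
  pose proof is_lim_ln_g as Hlng. apply is_lim_spec in Hlng.
  apply is_lim_spec. intros K. set (K' := Rmax K 1).
  assert (HK' : K <= K' /\ 1 <= K') by (split; [apply Rmax_l | apply Rmax_r]).
  destruct (Hlng (ln (g T) + M * (ln K' - ln (d T)))) as [N HN].
  exists (Rmax T N). intros x Hx.
  pose proof (Rmax_l T N). pose proof (Rmax_r T N).
  pose proof (HN x ltac:(lra)) as Hgx. simpl in Hgx.
  pose proof (ln_d_increment_ge M T x HaT HgT (fun y Hy => proj2 (proj2 (HT y Hy)))
                ltac:(lra)) as Hinc.
  assert (Hln : ln K' < ln (d x)) by (apply (Rmult_lt_reg_l M); lra).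
  apply ln_lt_inv in Hln; [simpl; lra | lra | apply d_pos; lra].
Qed.

Lemma is_lim_inv_g : is_lim (fun x => / g x) p_infty 0.
Proof. apply (is_lim_inv g p_infty p_infty is_lim_g). discriminate. Qed.

Lemma is_lim_ln_g_div_g : is_lim (fun x => ln (g x) / g x) p_infty 0.
Proof.
  apply (is_lim_comp (fun y => ln y / y) g p_infty 0 p_infty is_lim_div_ln_p is_lim_g).
  exists 0. intros; discriminate.
Qed.

Lemma is_lim_ln_d_div_g (m : R) : 0 < m ->
  Rbar_locally p_infty (fun x => m <= d x ^ 2 / (g x * d2 x)) ->
  is_lim (fun x => ln (d x) / g x) p_infty 0.
Proof.
  intros Hm Hev. destruct (eventually_beyond _ Hev) as [T HT].
  destruct (HT T (Rle_refl T)) as [HaT [HgT _]].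
  set (C := ln (d T) - ln (g T) / m).
  apply (is_lim_le_le_loc (fun x => ln (d a) * / g x)
           (fun x => C * / g x + / m * (ln (g x) / g x))).
  - exists T. intros x Hx. destruct (HT x ltac:(lra)) as [Hax [Hgx _]].
    pose proof (ln_d_increment_le m T x HaT HgT (fun y Hy => proj2 (proj2 (HT y Hy)))
                  ltac:(lra)) as Hinc.
    assert (Hgi : 0 < / g x) by (apply Rinv_0_lt_compat; lra).
    unfold Rdiv. split.
    + apply Rmult_le_compat_r; [lra |].
      apply ln_le; [apply d_pos | apply d_start_le]; lra.
    + replace (C * / g x + / m * (ln (g x) * / g x))
        with ((C + / m * ln (g x)) * / g x) by ring.
      apply Rmult_le_compat_r; [lra |].
      apply (Rmult_le_reg_l m); [lra |]. unfold C.
      replace (m * (ln (d T) - ln (g T) / m + / m * ln (g x)))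
        with (m * ln (d T) + (ln (g x) - ln (g T))) by (field; lra).
      lra.
  - replace (Finite 0) with (Rbar_mult (ln (d a)) 0) by (simpl; f_equal; ring).
    apply is_lim_scal_l, is_lim_inv_g.
  - replace (Finite 0) with (Finite (C * 0 + / m * 0)) by (f_equal; ring).
    apply is_lim_plus'.
    + apply (is_lim_scal_l _ C p_infty 0), is_lim_inv_g.
    + apply (is_lim_scal_l _ (/ m) p_infty 0), is_lim_ln_g_div_g.
Qed.

Theorem convex_growth_asymptotics (m M : R) : 0 < m -> 0 < M ->
  Rbar_locally p_infty (fun x => m <= d x ^ 2 / (g x * d2 x) <= M) ->
  (forall s t, a <= s -> s < t -> g s < g t) /\
  (forall s t, a <= s -> s < t -> d s < d t) /\
  is_lim g p_infty p_infty /\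
  is_lim d p_infty p_infty /\
  is_lim (fun x => ln (d x) / g x) p_infty 0.
Proof.
  intros Hm HM Hev.
  repeat split.
  - exact g_increasing.
  - exact d_increasing.
  - exact is_lim_g.
  - apply (is_lim_d M HM). revert Hev. apply filter_imp. tauto.
  - apply (is_lim_ln_d_div_g m Hm). revert Hev. apply filter_imp. tauto.
Qed.

End ConvexGrowth.

Section LogOfPositive.

Variables (f : R -> R) (a : R).

Hypothesis f_derivable : forall x, a <= x -> ex_derive f x.
Hypothesis Df_derivable : forall x, a <= x -> ex_derive (Derive f) x.
Hypothesis f_pos : forall x, a <= x -> 0 < f x.

Lemma is_derive_ln_pos (x : R) : a <= x ->
  is_derive (fun t => ln (f t)) x (Derive f x / f x).
Proof.
  intros Hx. apply is_derive_ln_comp; auto. now apply Derive_correct, f_derivable.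
Qed.

Lemma Derive_ln_pos (x : R) : a <= x ->
  Derive (fun t => ln (f t)) x = Derive f x / f x.
Proof. intros Hx. now apply is_derive_unique, is_derive_ln_pos. Qed.

Lemma ex_derive_log_derivative (x : R) : a <= x ->
  ex_derive (fun t => Derive f t / f t) x.
Proof.
  intros Hx. apply ex_derive_div; auto. specialize (f_pos x Hx). lra.
Qed.

Lemma continuity_pt_log_derivative (x : R) : a <= x ->
  continuity_pt (fun t => Derive f t / f t) x.
Proof.
  intros Hx. apply (continuity_pt_is_derive _ _ (Derive (fun t => Derive f t / f t) x)).
  now apply Derive_correct, ex_derive_log_derivative.
Qed.

(* Strict [a < x]: at [a] the second derivative of [ln o f] also depends on [f]
   left of [a]. *)
Lemma is_derive_log_derivative (x : R) : a < x ->
  is_derive (fun t => Derive f t / f t) x (Derive (Derive (fun t => ln (f t))) x).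
Proof.
  intros Hx. erewrite Derive_ext_loc.
  - apply Derive_correct, ex_derive_log_derivative; lra.
  - apply (locally_interval _ x a p_infty); [exact Hx | exact I |].
    intros y Hy _. apply Derive_ln_pos. simpl in Hy; lra.
Qed.

End LogOfPositive.

Theorem lemma2p1 (f : R -> R) (t0 : R) :
  0 <= t0 ->
  (forall t, 0 <= t -> 0 <= f t) ->
  C1_on_ge 0 f ->
  (forall t, t0 <= t -> 0 < f t) ->
  C2_on_ge t0 f ->
  H1 f (fun t => ln (f t)) t0 ->
  let g := fun t => ln (f t) in
  (forall s t, t0 <= s -> s < t -> g s < g t) /\
  (forall s t, t0 <= s -> s < t -> Derive g s < Derive g t) /\
  is_lim g p_infty p_infty /\
  is_lim (Derive g) p_infty p_infty /\
  is_lim (fun t => ln (Derive g t) / g t) p_infty (Finite 0).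
Proof.
  intros Ht0 _ C1 Hpos C2 [Hi [q [p [Hqp [Hr _]]]]] g.
  assert (Hq : 1 <= q) by (destruct Hqp as [[-> _] | [? _]]; lra).
  assert (Hf' : forall x, t0 <= x -> ex_derive f x) by (intros x Hx; apply C1; lra).
  assert (Hf'' : forall x, t0 <= x -> ex_derive (Derive f) x) by (intros x Hx; apply C2, Hx).
  set (K := fun t => Derive f t / f t).
  assert (HK : forall x, t0 <= x -> Derive g x = K x) by exact (Derive_ln_pos f t0 Hf' Hpos).
  assert (HKpos : forall x, t0 <= x -> 0 < K x)
    by (intros x Hx; rewrite <- (HK x Hx); apply Hi, Hx).
  assert (HKev : Rbar_locally p_infty (fun x => Derive g x = K x))
    by (exists t0; intros x Hx; apply HK; lra).
  assert (Hratio : Rbar_locally p_infty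
            (fun x => q - 1/2 <= K x ^ 2 / (g x * Derive (Derive g) x) <= q + 1/2)).
  { generalize (filter_and _ _ HKev (is_lim_eventually_near _ q (1/2) ltac:(lra) Hr)).
    apply filter_imp. intros x [<- Hx]. exact Hx. }
  destruct (convex_growth_asymptotics g K (Derive (Derive g)) t0
              (is_derive_ln_pos f t0 Hf' Hpos) (is_derive_log_derivative f t0 Hf' Hf'' Hpos)
              (continuity_pt_log_derivative f t0 Hf' Hf'' Hpos) HKpos
              (fun x Hx => proj2 (Hi x Hx)) (q - 1/2) (q + 1/2) ltac:(lra) ltac:(lra) Hratio)
    as [Hg [HKincr [Hlimg [HlimK HlimlnK]]]].
  repeat split; auto.
  - intros s t Hs Hst. rewrite (HK s), (HK t) by lra. now apply HKincr.
  - apply (is_lim_ext_loc K); auto.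
    revert HKev. apply filter_imp. auto.
  - apply (is_lim_ext_loc (fun x => ln (K x) / g x)); auto.
    revert HKev. apply filter_imp. intros x ->. reflexivity.
Qed.
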